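(* The Steiner–Plücker configuration is isomorphic to the incidence structure $\mathcal S$ whose points are the 20 four-element subsets of $\{0,1,\dots,6\}$ containing $0$, whose lines are the 15 three-element subsets of $\{0,1,\dots,6\}$ containing $0$, and in which a point is incident with a line iff the line's subset is contained in the point's subset. (Geometrically: these are the intersection points of the quadruples and the intersection lines of the triples, each containing $H_0$, of seven hyperplanes $H_0,\dots,H_6$ in general position in projective 4-space, which after a suitable projection to the plane form the Steiner–Plücker configuration.)
   Context: Steiner–Plücker configuration $(20_3,15_4)$: consider three triangles $A_iB_iC_i$ ($i=1,2,3$) in the projective plane, perspective from a common point $O$ (so $O,A_1,A_2,A_3$ are collinear, likewise for the $B$'s and the $C$'s). For each pair $i<j$, corresponding sides meet in three points $A_iB_i\cap A_jB_j$, $B_iC_i\cap B_jC_j$, $C_iA_i\cap C_jA_j$, which lie on the axis of perspectivity $a_{ij}$; the three axes $a_{12},a_{13},a_{23}$ pass through a common point $Z$. Combinatorially, the configuration has the 20 points $O$, the 9 vertices, the 9 side-intersection points and $Z$, and the 15 lines: the 3 lines through $O$ and corresponding vertices, the 9 sides, and the 3 axes, with the incidences just described (each line contains 4 of the points, each point lies on 3 of the lines). *)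

From mathcomp Require Import all_boot.
Set Implicit Arguments. Unset Strict Implicit. Unset Printing Implicit Defensive.

(* ---------- Combinatorial Steiner–Plücker configuration (20_3,15_4) ----------
   Triangles are indexed by i : 'I_3 (the paper's 1,2,3).
   Vertex types v : 'I_3 : 0 = A, 1 = B, 2 = C.
   Side types  s : 'I_3 : 0 = AB, 1 = BC, 2 = CA; side type s has vertex
   types s and s+1 (mod 3).
   Pairs {i,j} (i<>j) of triangles are 2-element subsets of 'I_3. *)

Inductive SP_raw_point :=
  | SP_O                                (* centre of perspectivity O *)
  | SP_V of 'I_3 & 'I_3                 (* SP_V v i : vertex of type v of triangle i *)
  | SP_S of 'I_3 & {set 'I_3}           (* SP_S s {i,j} : side_s(i) ∩ side_s(j) *)
  | SP_Z.                               (* common point Z of the three axes *)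

Inductive SP_raw_line :=
  | SP_LO of 'I_3                       (* line through O and the vertices of type v *)
  | SP_LSide of 'I_3 & 'I_3             (* SP_LSide s i : side of type s of triangle i *)
  | SP_LAxis of {set 'I_3}.             (* axis of perspectivity a_{ij} *)

Definition SP_point_ok (P : SP_raw_point) : bool :=
  if P is SP_S _ p then #|p| == 2 else true.
Definition SP_line_ok (L : SP_raw_line) : bool :=
  if L is SP_LAxis p then #|p| == 2 else true.

Definition SP_point := {P : SP_raw_point | SP_point_ok P}.
Definition SP_line := {L : SP_raw_line | SP_line_ok L}.

Definition vert_on_side (v s : 'I_3) : bool :=
  (v == s) || (nat_of_ord v == (nat_of_ord s).+1 %% 3).

Definition SP_raw_inc (P : SP_raw_point) (L : SP_raw_line) : bool :=
  match P, L with
  | SP_O, SP_LO _ => true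
  | SP_V v i, SP_LO v' => v == v'
  | SP_V v i, SP_LSide s i' => (i == i') && vert_on_side v s
  | SP_S s p, SP_LSide s' i => (s == s') && (i \in p)
  | SP_S s p, SP_LAxis p' => p == p'
  | SP_Z, SP_LAxis _ => true
  | _, _ => false
  end.

Definition SP_inc (P : SP_point) (L : SP_line) : bool :=
  SP_raw_inc (sval P) (sval L).

Definition S_point := {A : {set 'I_7} | (ord0 \in A) && (#|A| == 4)}.
Definition S_line := {B : {set 'I_7} | (ord0 \in B) && (#|B| == 3)}.

Definition S_inc (A : S_point) (B : S_line) : bool := sval B \subset sval A.

From mathcomp Require Import all_boot.
Set Implicit Arguments. Unset Strict Implicit. Unset Printing Implicit Defensive.

(* Both incidence structures are isomorphic to the one whose points (resp. lines)
   are the pairs (U, W) of subsets of {0,1,2} with |U| + |W| = 3 (resp. 2), with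
   componentwise inclusion as incidence.  For S, a set containing 0 is 0 together
   with a copy of U inside {1,2,3} and a copy of W inside {4,5,6}.  For the
   configuration, W is the set of triangles involved and U a set of vertex types:
   all of them for O, none for Z, the two types other than v for a vertex of type
   v or the line through O and the vertices of type v, and the type opposite to
   s for a side of type s or a point on it.  A vertex lies on a side exactly when
   its type is not the opposite one, and a pair of triangles contains another
   only if they are equal, so incidence becomes inclusion. *)

Section FinsetCard.
Variable T : finType.
Implicit Types A B : {set T}.

Lemma cardsT_eq A : #|A| = #|T| -> A = setT.
Proof. by move=> cardA; apply/eqP; rewrite eqEcard subsetT cardsT cardA /=. Qed.

Lemma cardsC1_exists A : #|A|.+1 = #|T| -> exists x, A = [set~ x].
Proof.
move=> cardA; have /cards1P[x Ax] : #|~: A| == 1.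
  by have /eqP := cardsC A; rewrite -cardA -addn1 eqn_add2l.
by exists x; rewrite -Ax setCK.
Qed.

Lemma subset_card_gt A B : #|B| < #|A| -> (A \subset B) = false.
Proof. by move=> ltBA; apply/negbTE/negP => /subset_leq_card; rewrite leqNgt ltBA. Qed.

End FinsetCard.

Section MergeParts.
Variables m n : nat.

Definition inl_elt (v : 'I_m) : 'I_(m + n).+1 := lift ord0 (lshift n v).
Definition inr_elt (w : 'I_n) : 'I_(m + n).+1 := lift ord0 (rshift m w).

Definition merge_parts (UW : {set 'I_m} * {set 'I_n}) : {set 'I_(m + n).+1} :=
  ord0 |: (inl_elt @: UW.1 :|: inr_elt @: UW.2).

Definition card_parts (UW : {set 'I_m} * {set 'I_n}) : nat := #|UW.1| + #|UW.2|.

Definition split_parts (A : {set 'I_(m + n).+1}) : {set 'I_m} * {set 'I_n} :=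
  ([set v | inl_elt v \in A], [set w | inr_elt w \in A]).

Arguments merge_parts : simpl never.
Arguments split_parts : simpl never.

Lemma inl_elt_inj : injective inl_elt.
Proof. by move=> v v' /lift_inj /lshift_inj. Qed.

Lemma inr_elt_inj : injective inr_elt.
Proof. by move=> w w' /lift_inj /rshift_inj. Qed.

Lemma inl_inr_elt_neq v w : inl_elt v != inr_elt w.
Proof. by rewrite (inj_eq (@lift_inj _ ord0)) eq_lrshift. Qed.

Lemma inl_elt_eq0 v : (inl_elt v == ord0) = false.
Proof. by rewrite eq_sym (negbTE (neq_lift _ _)). Qed.

Lemma inr_elt_eq0 w : (inr_elt w == ord0) = false.
Proof. by rewrite eq_sym (negbTE (neq_lift _ _)). Qed.

Lemma inl_elt_in_inr_image v (W : {set 'I_n}) : (inl_elt v \in inr_elt @: W) = false.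
Proof. by apply/imsetP => -[w _ /eqP]; rewrite (negbTE (inl_inr_elt_neq _ _)). Qed.

Lemma inr_elt_in_inl_image w (U : {set 'I_m}) : (inr_elt w \in inl_elt @: U) = false.
Proof. by apply/imsetP => -[v _ /eqP]; rewrite eq_sym (negbTE (inl_inr_elt_neq _ _)). Qed.

Lemma mem0_merge_parts UW : ord0 \in merge_parts UW.
Proof. exact: setU11. Qed.

Lemma mem_merge_parts_inl UW v : (inl_elt v \in merge_parts UW) = (v \in UW.1).
Proof.
by rewrite !inE inl_elt_eq0 (mem_imset _ _ inl_elt_inj) inl_elt_in_inr_image orbF.
Qed.

Lemma mem_merge_parts_inr UW w : (inr_elt w \in merge_parts UW) = (w \in UW.2).
Proof.
by rewrite !inE inr_elt_eq0 (mem_imset _ _ inr_elt_inj) inr_elt_in_inl_image.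
Qed.

Lemma merge_partsK : cancel merge_parts split_parts.
Proof.
move=> [U W]; congr pair; apply/setP => x; rewrite inE.
  exact: mem_merge_parts_inl.
exact: mem_merge_parts_inr.
Qed.

Lemma split_partsK (A : {set 'I_(m + n).+1}) :
  ord0 \in A -> merge_parts (split_parts A) = A.
Proof.
move=> A0; apply/setP => x; case: (unliftP ord0 x) => [y ->|->]; last first.
  by rewrite mem0_merge_parts A0.
case: (split_ordP y) => [v ->|w ->].
  by rewrite (mem_merge_parts_inl _ v) inE.
by rewrite (mem_merge_parts_inr _ w) inE.
Qed.

Lemma card_merge_parts UW : #|merge_parts UW| = (card_parts UW).+1.
Proof.
rewrite /card_parts cardsU1 cardsU !card_imset ?inE;
  [|exact: inr_elt_inj|exact: inl_elt_inj].
have -> : inl_elt @: UW.1 :&: inr_elt @: UW.2 = set0.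
  by apply/setP => x; rewrite !inE; apply/andP => -[/imsetP[v _ ->]];
     rewrite inl_elt_in_inr_image.
rewrite cards0 subn0.
suff -> : (ord0 \in inl_elt @: UW.1) || (ord0 \in inr_elt @: UW.2) = false by [].
by apply/negbTE/norP; split; apply/imsetP => -[? _ /eqP];
  rewrite eq_sym ?inl_elt_eq0 ?inr_elt_eq0.
Qed.

Lemma card_split_parts (A : {set 'I_(m + n).+1}) :
  ord0 \in A -> card_parts (split_parts A) = #|A|.-1.
Proof. by move=> A0; rewrite -{2}(split_partsK A0) card_merge_parts. Qed.

Lemma subset_merge_parts UW UW' :
  (merge_parts UW \subset merge_parts UW') = (UW.1 \subset UW'.1) && (UW.2 \subset UW'.2).
Proof.
apply/idP/andP => [sub | [sub1 sub2]].
  split; apply/subsetP => x.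
    by rewrite -!mem_merge_parts_inl; apply: (subsetP sub).
  by rewrite -!mem_merge_parts_inr; apply: (subsetP sub).
by apply: setUS; apply: setUSS; apply: imsetS.
Qed.

End MergeParts.

Definition preim_pick (T : finType) (T' : eqType) (x0 : T) (f : T -> T') (y : T') : T :=
  odflt x0 [pick x | f x == y].

Lemma preim_pickK (T : finType) (T' : eqType) (x0 : T) (f : T -> T') :
  injective f -> cancel f (preim_pick x0 f).
Proof.
move=> f_inj x; rewrite /preim_pick; case: pickP => [x' /eqP/f_inj // | /(_ x)].
by rewrite eqxx.
Qed.

Lemma setC1_inj (T : finType) : injective (fun x : T => [set~ x]).
Proof. by move=> x y /setC_inj /set1_inj. Qed.

Lemma vert_on_sideE (v s : 'I_3) : vert_on_side v s = (v != ord_pred s).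
Proof. by case: v s => [[|[|[|//]]] ?] [[|[|[|//]]] ?]. Qed.

Definition point_parts (P : SP_raw_point) : {set 'I_3} * {set 'I_3} :=
  match P with
  | SP_O => (setT, set0)
  | SP_V v i => ([set~ v], [set i])
  | SP_S s p => ([set ord_pred s], p)
  | SP_Z => (set0, setT)
  end.

Definition line_parts (L : SP_raw_line) : {set 'I_3} * {set 'I_3} :=
  match L with
  | SP_LO v => ([set~ v], set0)
  | SP_LSide s i => ([set ord_pred s], [set i])
  | SP_LAxis p => (set0, p)
  end.

Lemma card_setC1_I3 (v : 'I_3) : #|[set~ v]| = 2.
Proof. by rewrite cardsC1 card_ord. Qed.

Lemma SP_point_okE P : SP_point_ok P = (card_parts (point_parts P) == 3).
Proof.
by case: P => [|v i|s p|];
  rewrite /card_parts /= ?cardsT ?cards0 ?cards1 ?card_ord ?card_setC1_I3.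
Qed.

Lemma SP_line_okE L : SP_line_ok L = (card_parts (line_parts L) == 2).
Proof.
by case: L => [v|s i|p]; rewrite /card_parts /= ?cards0 ?cards1 ?card_setC1_I3.
Qed.

Lemma SP_raw_incE P L : SP_point_ok P -> SP_line_ok L ->
  SP_raw_inc P L = ((line_parts L).1 \subset (point_parts P).1)
                   && ((line_parts L).2 \subset (point_parts P).2).
Proof.
case: P => [|v i|s p|] /=; case: L => [v'|s' i'|p'] /= okP okL;
  rewrite ?subsetT ?sub0set ?andbT ?setCS ?sub1set ?inE //.
- by rewrite subset_card_gt ?(eqP okL) ?cards0.
- by rewrite vert_on_sideE andbC eq_sym [i' == i]eq_sym.
- by rewrite subset_card_gt ?(eqP okL) ?cards1.
- by rewrite subset_card_gt ?card_setC1_I3 ?cards1.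
- by rewrite (inj_eq (@ord_pred_inj 3)) eq_sym.
- by rewrite eq_sym eqEcard (eqP okP) (eqP okL) leqnn andbT.
- by rewrite subset_card_gt ?card_setC1_I3 ?cards0.
Qed.

Definition point_of_parts (UW : {set 'I_3} * {set 'I_3}) : SP_raw_point :=
  let: (U, W) := UW in
  match #|W| with
  | 0 => SP_O
  | 1 => SP_V (preim_pick ord0 (fun v => [set~ v]) U) (preim_pick ord0 set1 W)
  | 2 => SP_S (ordS (preim_pick ord0 set1 U)) W
  | _ => SP_Z
  end.

Definition line_of_parts (UW : {set 'I_3} * {set 'I_3}) : SP_raw_line :=
  let: (U, W) := UW in
  match #|W| with
  | 0 => SP_LO (preim_pick ord0 (fun v => [set~ v]) U)
  | 1 => SP_LSide (ordS (preim_pick ord0 set1 U)) (preim_pick ord0 set1 W)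
  | _ => SP_LAxis W
  end.

Arguments point_of_parts : simpl never.
Arguments line_of_parts : simpl never.

Lemma point_partsK P : SP_point_ok P -> point_of_parts (point_parts P) = P.
Proof.
case: P => [|v i|s p|] okP;
  rewrite /point_of_parts /= ?cards0 ?cards1 ?cardsT ?card_ord ?(eqP okP) //.
  by rewrite (preim_pickK _ (@setC1_inj _)) (preim_pickK _ (@set1_inj _)).
by rewrite (preim_pickK _ (@set1_inj _)) ord_predK.
Qed.

Lemma point_of_partsK UW : card_parts UW = 3 -> point_parts (point_of_parts UW) = UW.
Proof.
case: UW => U W; rewrite /point_of_parts /card_parts /=.
move=> /(congr1 (subn^~ #|W|)); rewrite addnK.
have := max_card W; rewrite card_ord.
case cardW: #|W| => [|[|[|[|//]]]] _ cardU /=.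
- by rewrite (cards0_eq cardW) (@cardsT_eq _ U) ?card_ord.
- have [v ->] : exists v, U = [set~ v] by apply: cardsC1_exists; rewrite cardU card_ord.
  have /cards1P[i ->] : #|W| == 1 by rewrite cardW.
  by rewrite (preim_pickK _ (@setC1_inj _)) (preim_pickK _ (@set1_inj _)).
- have /cards1P[u ->] : #|U| == 1 by rewrite cardU.
  by rewrite (preim_pickK _ (@set1_inj _)) ordSK.
- by rewrite (cards0_eq cardU) (@cardsT_eq _ W) ?card_ord.
Qed.

Lemma line_partsK L : SP_line_ok L -> line_of_parts (line_parts L) = L.
Proof.
case: L => [v|s i|p] okL; rewrite /line_of_parts /= ?cards0 ?cards1 ?(eqP okL) //.
  by rewrite (preim_pickK _ (@setC1_inj _)).
by rewrite !(preim_pickK _ (@set1_inj _)) ord_predK.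
Qed.

Lemma line_of_partsK UW : card_parts UW = 2 -> line_parts (line_of_parts UW) = UW.
Proof.
case: UW => U W; rewrite /line_of_parts /card_parts /= => cardUW.
have := congr1 (subn^~ #|W|) cardUW; rewrite addnK.
case cardW: #|W| => [|[|[|k]]] cardU /=.
- have [v ->] : exists v, U = [set~ v] by apply: cardsC1_exists; rewrite cardU card_ord.
  by rewrite (preim_pickK _ (@setC1_inj _)) (cards0_eq cardW).
- have /cards1P[u ->] : #|U| == 1 by rewrite cardU.
  have /cards1P[i ->] : #|W| == 1 by rewrite cardW.
  by rewrite !(preim_pickK _ (@set1_inj _)) ordSK.
- by rewrite (cards0_eq cardU).
- by move: cardUW; rewrite cardW !addnS.
Qed.

Lemma card_parts_S_point (A : S_point) : card_parts (@split_parts 3 3 (val A)) = 3.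
Proof. by case/andP: (valP A) => A0 /eqP cardA; rewrite card_split_parts // cardA. Qed.

Lemma card_parts_S_line (B : S_line) : card_parts (@split_parts 3 3 (val B)) = 2.
Proof. by case/andP: (valP B) => B0 /eqP cardB; rewrite card_split_parts // cardB. Qed.

Lemma point_map_subproof (P : SP_point) :
  (ord0 \in merge_parts (point_parts (val P)))
  && (#|merge_parts (point_parts (val P))| == 4).
Proof. by rewrite mem0_merge_parts card_merge_parts eqSS -SP_point_okE (valP P). Qed.

Lemma line_map_subproof (L : SP_line) :
  (ord0 \in merge_parts (line_parts (val L)))
  && (#|merge_parts (line_parts (val L))| == 3).
Proof. by rewrite mem0_merge_parts card_merge_parts eqSS -SP_line_okE (valP L). Qed.

Lemma point_unmap_subproof (A : S_point) :
  SP_point_ok (point_of_parts (@split_parts 3 3 (val A))).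
Proof. by rewrite SP_point_okE point_of_partsK card_parts_S_point. Qed.

Lemma line_unmap_subproof (B : S_line) :
  SP_line_ok (line_of_parts (@split_parts 3 3 (val B))).
Proof. by rewrite SP_line_okE line_of_partsK card_parts_S_line. Qed.

Definition point_map (P : SP_point) : S_point :=
  exist _ (merge_parts (point_parts (val P))) (point_map_subproof P).
Definition line_map (L : SP_line) : S_line :=
  exist _ (merge_parts (line_parts (val L))) (line_map_subproof L).
Definition point_unmap (A : S_point) : SP_point :=
  exist _ (point_of_parts (@split_parts 3 3 (val A))) (point_unmap_subproof A).
Definition line_unmap (B : S_line) : SP_line :=
  exist _ (line_of_parts (@split_parts 3 3 (val B))) (line_unmap_subproof B).

Lemma point_mapK : cancel point_map point_unmap.
Proof. by case=> P okP; apply/val_inj; rewrite /= merge_partsK point_partsK. Qed.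

Lemma point_unmapK : cancel point_unmap point_map.
Proof.
move=> A; apply/val_inj; rewrite /= point_of_partsK ?card_parts_S_point //.
by rewrite split_partsK //; case/andP: (valP A).
Qed.

Lemma line_mapK : cancel line_map line_unmap.
Proof. by case=> L okL; apply/val_inj; rewrite /= merge_partsK line_partsK. Qed.

Lemma line_unmapK : cancel line_unmap line_map.
Proof.
move=> B; apply/val_inj; rewrite /= line_of_partsK ?card_parts_S_line //.
by rewrite split_partsK //; case/andP: (valP B).
Qed.

Theorem lemma4p4 :
  exists (f : SP_point -> S_point) (g : SP_line -> S_line),
    [/\ bijective f, bijective g &
        forall (P : SP_point) (L : SP_line), SP_inc P L = S_inc (f P) (g L)].
Proof.
exists point_map, line_map; split.
- exact: Bijective point_mapK point_unmapK.
- exact: Bijective line_mapK line_unmapK.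
- move=> [P okP] [L okL].
  by rewrite /SP_inc /S_inc /= (@subset_merge_parts 3 3) SP_raw_incE.
Qed.
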